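(* Let $X$ be a real Hilbert space, let $\alpha\in\mathbb{R}\setminus\{0\}$ and $\beta>0$, equip $X\times X\times\mathbb{R}$ with the norm $\|(x,y,\gamma)\|=\sqrt{\|x\|^2+\|y\|^2+\beta^2|\gamma|^2}$, and let $$C_\alpha=\{(x,y,\gamma)\in X\times X\times\mathbb{R} : \langle x,y\rangle=\alpha\gamma\}.$$ Let $(x_0,y_0,\gamma_0)\in X\times X\times\mathbb{R}$. Then: (i) If $x_0\neq y_0$ and $x_0\neq -y_0$, then $$P_{C_\alpha}(x_0,y_0,\gamma_0)=\Big\{\Big(\frac{x_0-\lambda y_0}{1-\lambda^2},\frac{y_0-\lambda x_0}{1-\lambda^2},\gamma_0+\frac{\lambda\alpha}{\beta^2}\Big)\Big\}$$ for the unique $\lambda\in]-1,1[$ solving $g(\lambda):=\frac{(\lambda^2+1)p-2\lambda q}{(1-\lambda^2)^2}-\frac{2\lambda\alpha^2}{\beta^2}-2\alpha\gamma_0=0$, where $p:=2\langle x_0,y_0\rangle$ and $q:=\|x_0\|^2+\|y_0\|^2$. (ii) If $y_0=-x_0\neq 0$: (a) when $\alpha(\gamma_0-\frac{\alpha}{\beta^2})<-\frac{\|x_0\|^2}{4}$, then $P_{C_\alpha}(x_0,-x_0,\gamma_0)=\{(\frac{x_0}{1-\lambda},\frac{-x_0}{1-\lambda},\gamma_0+\frac{\lambda\alpha}{\beta^2})\}$ for the unique $\lambda\in]-1,1[$ solving $g_1(\lambda):=\frac{2\|x_0\|^2}{(1-\lambda)^2}+\frac{2\lambda\alpha^2}{\beta^2}+2\alpha\gamma_0=0$;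 (b) when $\alpha(\gamma_0-\frac{\alpha}{\beta^2})\geq-\frac{\|x_0\|^2}{4}$, then $$P_{C_\alpha}(x_0,-x_0,\gamma_0)=\Big\{\Big(\frac{x_0}{2}+\frac{u}{\sqrt2},-\frac{x_0}{2}+\frac{u}{\sqrt2},\gamma_0-\frac{\alpha}{\beta^2}\Big): u\in X,\ \|u\|=\sqrt{2\alpha\big(\gamma_0-\tfrac{\alpha}{\beta^2}\big)+\tfrac{\|x_0\|^2}{2}}\Big\},$$ which is a singleton if and only if $\alpha(\gamma_0-\frac{\alpha}{\beta^2})=-\frac{\|x_0\|^2}{4}$. (iii) If $y_0=x_0\neq 0$: (a) when $\alpha(\gamma_0+\frac{\alpha}{\beta^2})>\frac{\|x_0\|^2}{4}$, then $P_{C_\alpha}(x_0,x_0,\gamma_0)=\{(\frac{x_0}{1+\lambda},\frac{x_0}{1+\lambda},\gamma_0+\frac{\lambda\alpha}{\beta^2})\}$ for the unique $\lambda\in]-1,1[$ solving $g_2(\lambda):=\frac{2\|x_0\|^2}{(1+\lambda)^2}-\frac{2\lambda\alpha^2}{\beta^2}-2\alpha\gamma_0=0$; (b) when $\alpha(\gamma_0+\frac{\alpha}{\beta^2})\leq\frac{\|x_0\|^2}{4}$, then $$P_{C_\alpha}(x_0,x_0,\gamma_0)=\Big\{\Big(\frac{x_0}{2}-\frac{v}{\sqrt2},\frac{x_0}{2}+\frac{v}{\sqrt2},\gamma_0+\frac{\alpha}{\beta^2}\Big): v\in X,\ \|v\|=\sqrt{-2\alpha\big(\gamma_0+\tfrac{\alpha}{\beta^2}\big)+\tfrac{\|x_0\|^2}{2}}\Big\},$$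 which is a singleton if and only if $\alpha(\gamma_0+\frac{\alpha}{\beta^2})=\frac{\|x_0\|^2}{4}$. (iv) If $x_0=y_0=0$: (a) when $\alpha\gamma_0>\frac{\alpha^2}{\beta^2}$, $P_{C_\alpha}(0,0,\gamma_0)$ is the non-singleton set $\{(\frac{u}{\sqrt2},\frac{u}{\sqrt2},\gamma_0-\frac{\alpha}{\beta^2}): u\in X,\ \|u\|=\sqrt{2\alpha(\gamma_0-\frac{\alpha}{\beta^2})}\}$; (b) when $|\alpha\gamma_0|\leq\frac{\alpha^2}{\beta^2}$, $P_{C_\alpha}(0,0,\gamma_0)=\{(0,0,0)\}$; (c) when $\alpha\gamma_0<-\frac{\alpha^2}{\beta^2}$, $P_{C_\alpha}(0,0,\gamma_0)$ is the non-singleton set $\{(-\frac{v}{\sqrt2},\frac{v}{\sqrt2},\gamma_0+\frac{\alpha}{\beta^2}): v\in X,\ \|v\|=\sqrt{-2\alpha(\gamma_0+\frac{\alpha}{\beta^2})}\}$.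
   Context: For a nonempty set $S\subseteq X\times X\times\mathbb{R}$, the projection $P_S(z)$ is the set $\operatorname{argmin}_{w\in S}\|w-z\|$, where the norm is the $\beta$-weighted norm $\|(x,y,\gamma)\|=\sqrt{\|x\|^2+\|y\|^2+\beta^2|\gamma|^2}$. *)

From HB Require Import structures.
From mathcomp Require Import all_boot all_order all_algebra.
From mathcomp Require Import all_classical all_reals all_analysis.
Set Implicit Arguments. Unset Strict Implicit. Unset Printing Implicit Defensive.
Import Order.TTheory GRing.Theory Num.Theory.
Import numFieldNormedType.Exports.
Local Open Scope ring_scope.
Local Open Scope classical_set_scope.

Definition is_inner_product (R : realType) (X : normedModType R)
  (ip : X -> X -> R) : Prop :=
  [/\ (forall x y, ip x y = ip y x),
      (forall (a : R) x y z, ip (a *: x + y) z = a * ip x z + ip y z)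
    & (forall x, ip x x = `|x| ^+ 2)].

Definition wdist (R : realType) (X : normedModType R) (beta : R)
  (w z : X * X * R) : R :=
  Num.sqrt (`|w.1.1 - z.1.1| ^+ 2 + `|w.1.2 - z.1.2| ^+ 2
            + beta ^+ 2 * `|w.2 - z.2| ^+ 2).

Definition wproj (R : realType) (X : normedModType R) (beta : R)
  (S : set (X * X * R)) (z : X * X * R) : set (X * X * R) :=
  [set w | S w /\ forall w', S w' -> wdist beta w z <= wdist beta w' z].

Definition Calpha (R : realType) (X : normedModType R) (ip : X -> X -> R)
  (alpha : R) : set (X * X * R) :=
  [set w | ip w.1.1 w.1.2 = alpha * w.2].

Definition is_singleton (T : Type) (A : set T) : Prop := exists w, A = [set w].

From HB Require Import structures.
From mathcomp Require Import all_boot all_order all_algebra.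
From mathcomp Require Import all_classical all_reals all_analysis.
From mathcomp Require Import ring lra.
Import Order.TTheory GRing.Theory Num.Theory.
Import numFieldNormedType.Exports.
Local Open Scope ring_scope.
Local Open Scope classical_set_scope.
Set Implicit Arguments. Unset Strict Implicit. Unset Printing Implicit Defensive.

(* Call ws = (xs, ys, gs) in C_alpha a Lagrange point of z = (x0, y0, g0) with
   multiplier l when x0 = xs + l ys, y0 = ys + l xs and beta^2 (gs - g0) = l alpha.
   Expanding the norms with <x, y> = alpha g shows that every w = (xs + h, ys + k, g)
   in C_alpha satisfies
     ||w - z||^2 = ||ws - z||^2 + ((1 + l) ||h + k||^2 + (1 - l) ||h - k||^2) / 2
                   + beta^2 (g - gs)^2,
   so for |l| <= 1 the projection is the zero set of the excess: {ws} if |l| < 1,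
   and {w in C_alpha | x - y = x0, g = gs} if l = -1.
   In cases (i) and (ii)(a), ws lies in C_alpha iff g(l) = 0 resp. g1(l) = 0; a root
   in ]-1, 1[ exists because the numerator polynomial changes sign between -1 and 1,
   and it is unique because distinct multipliers give distinct projections.  Case
   (ii)(b) is l = -1, where the admissible points form a sphere; (iv)(a) is its
   instance x0 = 0, and (iv)(b) uses l = -g0 beta^2 / alpha with ws = 0.  Cases (iii)
   and (iv)(c) follow from (ii) and (iv)(a) through the isometry
   (x, y, g) |-> (x, -y, -g), which preserves C_alpha. *)

Lemma subrACA (V : zmodType) (a b c d : V) : (a - b) - (c - d) = (a - c) - (b - d).
Proof. by rewrite !opprB addrACA [in RHS]addrACA [- c + _]addrC. Qed.

Section Involution.
Variables (T : Type) (f : T -> T).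
Hypothesis fK : involutive f.

Lemma preimage_involutive (A : set T) : f @^-1` (f @^-1` A) = A.
Proof. by apply/seteqP; split=> w /=; rewrite fK. Qed.

Lemma preimage_set1_involutive (a : T) : f @^-1` [set a] = [set f a].
Proof. by apply/seteqP; split=> w /= => [<-|->]; rewrite fK. Qed.

Lemma is_singleton_preimage_involutive (A : set T) :
  is_singleton (f @^-1` A) <-> is_singleton A.
Proof.
split=> -[a Aa]; exists (f a); last by rewrite Aa preimage_set1_involutive.
by rewrite -(preimage_involutive A) Aa preimage_set1_involutive.
Qed.

End Involution.

Section NormedSpace.
Variables (R : realType) (X : normedModType R).

Lemma sqr_normZ (a : R) (v : X) : `|a *: v| ^+ 2 = a ^+ 2 * `|v| ^+ 2.
Proof. by rewrite normrZ exprMn real_normK ?num_real. Qed.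

Lemma norm_eq_sqrt (v : X) (S : R) : 0 <= S -> (`|v| = Num.sqrt S) <-> (`|v| ^+ 2 = S).
Proof.
move=> S_ge0; split=> [->|<-]; first exact: sqr_sqrtr.
by rewrite sqrtr_sqr normr_id.
Qed.

Lemma sqr_norm_eq0 (v : X) : `|v| ^+ 2 = 0 -> v = 0.
Proof. by move/eqP; rewrite sqrf_eq0 normr_eq0 => /eqP. Qed.

Lemma mul_sqr_norm_eq0 (c : R) (v : X) : c != 0 -> c * `|v| ^+ 2 = 0 -> v = 0.
Proof. by move=> c_neq0 /eqP; rewrite mulf_eq0 (negbTE c_neq0) => /eqP/sqr_norm_eq0. Qed.

Lemma double_eq0 (v : X) : v + v = 0 -> v = 0.
Proof.
move=> vv; apply/normr0_eq0; have := normrMn v 2.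
by rewrite !mulr2n vv normr0; lra.
Qed.

Lemma exists_norm (r : R) : (exists x : X, x != 0) -> 0 <= r -> exists u : X, `|u| = r.
Proof.
case=> e e_neq0 r_ge0; exists ((r / `|e|) *: e).
by rewrite normrZ ger0_norm ?divr_ge0 // divfK // normr_eq0.
Qed.

Lemma sphere_param_singleton (T : Type) (f : X -> T) (r : R) :
  (exists x : X, x != 0) -> injective f -> 0 <= r ->
  is_singleton [set w | exists u : X, `|u| = r /\ w = f u] <-> r = 0.
Proof.
move=> X_nontrivial f_inj r_ge0; split.
- case=> w sphereE; have [u ur] := exists_norm X_nontrivial r_ge0.
  have fu : [set w] (f u) by rewrite -sphereE; exists u.
  have fNu : [set w] (f (- u)) by rewrite -sphereE; exists (- u); rewrite normrN.
  have /double_eq0 u0 : u + u = 0.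
    by rewrite {1}(f_inj _ _ (etrans fu (esym fNu))) addNr.
  by rewrite -ur u0 normr0.
- move=> r0; exists (f 0); apply/seteqP; split=> w /=.
  + by case=> u [ur ->]; move: ur; rewrite r0 => /normr0_eq0 ->.
  + by move=> ->; exists 0; rewrite normr0 r0.
Qed.

Lemma preimage_sphere_involutive (T : Type) (f : T -> T) (h k : X -> T) (r : R) :
  involutive f -> (forall u, f (h u) = k (- u)) ->
  f @^-1` [set w | exists u : X, `|u| = r /\ w = h u] =
  [set w | exists v : X, `|v| = r /\ w = k v].
Proof.
move=> fK fhk; apply/seteqP; split=> w /=.
- case=> u [ur /(congr1 f)]; rewrite fK fhk => ->.
  by exists (- u); rewrite normrN.
- case=> v [vr ->]; exists (- v); split; first by rewrite normrN.
  by rewrite -[v in LHS]opprK -fhk fK.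
Qed.

End NormedSpace.

Section WeightedProjection.
Variables (R : realType) (X : normedModType R) (beta : R).

Definition sqwdist (w z : X * X * R) : R :=
  `|w.1.1 - z.1.1| ^+ 2 + `|w.1.2 - z.1.2| ^+ 2 + beta ^+ 2 * `|w.2 - z.2| ^+ 2.

Lemma sqwdist_ge0 w z : 0 <= sqwdist w z.
Proof. by apply: addr_ge0; [apply: addr_ge0 | apply: mulr_ge0]; apply: sqr_ge0. Qed.

Lemma wdist_le w w' z :
  (wdist beta w z <= wdist beta w' z) = (sqwdist w z <= sqwdist w' z).
Proof. by rewrite /wdist ler_sqrt //; apply: sqwdist_ge0. Qed.

Lemma wproj_excess (S : set (X * X * R)) z ws (D : X * X * R -> R) :
  S ws -> (forall w, S w -> 0 <= D w /\ sqwdist w z = sqwdist ws z + D w) ->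
  wproj beta S z = [set w | S w /\ D w = 0].
Proof.
move=> Sws excess; apply/seteqP; split=> w /=.
- case=> Sw min; split=> //; have := min ws Sws; rewrite wdist_le.
  by have [D_ge0 ->] := excess w Sw; lra.
- case=> Sw D0; split=> // w' Sw'; rewrite wdist_le.
  by have [_ ->] := excess w Sw; have [D'_ge0 ->] := excess w' Sw'; lra.
Qed.

Lemma wproj_involutive (S : set (X * X * R)) (f : X * X * R -> X * X * R) :
  involutive f -> (forall w, S (f w) <-> S w) ->
  (forall w z, wdist beta (f w) (f z) = wdist beta w z) ->
  forall z, wproj beta S (f z) = f @^-1` wproj beta S z.
Proof.
move=> fK Sf fdist z; have fdistK w : wdist beta w (f z) = wdist beta (f w) z.
  by rewrite -fdist fK.
apply/seteqP; split=> w /=.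
- case=> Sw min; split=> [|w' Sw']; first by rewrite Sf.
  by rewrite -fdistK -[w']fK -fdistK; apply/min/Sf.
- case=> Sfw min; split=> [|w' Sw']; first by rewrite -Sf.
  by rewrite !fdistK; apply/min/Sf.
Qed.

End WeightedProjection.

Section IntervalRoots.
Variable R : realType.

Lemma poly_sign_change_root (p : {poly R}) :
  p.[-1] * p.[1] < 0 -> exists2 l, -1 < l < 1 & p.[l] = 0.
Proof.
move=> sign; have [|||c] := @IVT R (horner p) (-1) 1 0.
- lra.
- exact/continuous_subspaceT/continuous_horner.
- rewrite ge_min le_max; have [a_le0|a_gt0] := leP p.[-1] 0.
  + have b_ge0 : 0 <= p.[1] by nra.
    by rewrite b_ge0 orbT.
  + have b_le0 : p.[1] <= 0 by nra.
    by rewrite b_le0 (ltW a_gt0).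
rewrite in_itv /= => /andP[c_ge c_le] pc; exists c => //.
rewrite !lt_neqAle c_ge c_le !andbT; apply/andP; split; apply/eqP => c_end.
- by move: sign; rewrite c_end pc mul0r ltxx.
- by move: sign; rewrite -c_end pc mulr0 ltxx.
Qed.

Lemma exists_unique_root_singleton (T : Type) (A : set T) (g : R -> R)
    (n : {poly R}) (d : R -> R) (w : R -> T) :
  injective w -> n.[-1] * n.[1] < 0 ->
  (forall l, -1 < l < 1 -> g l = n.[l] / d l) ->
  (forall l, -1 < l < 1 -> g l = 0 -> A = [set w l]) ->
  exists l, [/\ -1 < l < 1, g l = 0,
    (forall l', -1 < l' < 1 -> g l' = 0 -> l' = l) & A = [set w l]].
Proof.
move=> w_inj /poly_sign_change_root[l hl nl] gE Aw.
have gl : g l = 0 by rewrite gE // nl mul0r.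
exists l; split=> // [l' hl' gl'|]; last exact: Aw.
have E : [set w l] = [set w l'] by rewrite -(Aw l hl gl) (Aw l' hl' gl').
by have /w_inj : [set w l] (w l') by rewrite E.
Qed.

End IntervalRoots.

Section CalphaProjection.
Variables (R : realType) (X : normedModType R) (ip : X -> X -> R).
Hypothesis ip_inner : is_inner_product ip.

Lemma ipC x y : ip x y = ip y x. Proof. by case: ip_inner. Qed.

Lemma ipxx x : ip x x = `|x| ^+ 2. Proof. by case: ip_inner. Qed.

Lemma ipZlD a x y z : ip (a *: x + y) z = a * ip x z + ip y z.
Proof. by case: ip_inner. Qed.

Lemma ip0l z : ip 0 z = 0.
Proof. by have := ipZlD 1 0 0 z; rewrite scale1r addr0 mul1r; lra. Qed.

Lemma ipZl a x z : ip (a *: x) z = a * ip x z.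
Proof. by rewrite -[a *: x]addr0 ipZlD ip0l addr0. Qed.

Lemma ipDl x y z : ip (x + y) z = ip x z + ip y z.
Proof. by rewrite -[x in LHS]scale1r ipZlD mul1r. Qed.

Lemma ipNl x z : ip (- x) z = - ip x z.
Proof. by rewrite -scaleN1r ipZl mulN1r. Qed.

Lemma ipZr a x z : ip z (a *: x) = a * ip z x. Proof. by rewrite ipC ipZl ipC. Qed.
Lemma ipDr x y z : ip z (x + y) = ip z x + ip z y. Proof. by rewrite ipC ipDl !(ipC z). Qed.
Lemma ipNr x z : ip z (- x) = - ip z x. Proof. by rewrite ipC ipNl ipC. Qed.

Definition ipE := (ipDl, ipDr, ipNl, ipNr, ipZl, ipZr).

Lemma ip_diff_sqr x y : ip (x + y) (- x + y) = `|y| ^+ 2 - `|x| ^+ 2.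
Proof. by rewrite !ipE !ipxx (ipC y); ring. Qed.

Lemma normD2 x y : `|x + y| ^+ 2 = `|x| ^+ 2 + 2 * ip x y + `|y| ^+ 2.
Proof. by rewrite -ipxx !ipE !ipxx (ipC y); ring. Qed.

Lemma normB2 x y : `|x - y| ^+ 2 = `|x| ^+ 2 - 2 * ip x y + `|y| ^+ 2.
Proof. by rewrite -ipxx !ipE !ipxx (ipC y); ring. Qed.

Variables (alpha beta : R).
Hypothesis beta_neq0 : beta != 0.

Local Notation C := (Calpha ip alpha).

(* Stationarity of 1/2 ||w - z||^2 + l (<x, y> - alpha g) at ws in C_alpha. *)
Definition lagrange_point (l : R) (ws z : X * X * R) : Prop :=
  [/\ C ws, z.1.1 = ws.1.1 + l *: ws.1.2, z.1.2 = ws.1.2 + l *: ws.1.1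
    & beta ^+ 2 * (ws.2 - z.2) = l * alpha].

Definition lagrange_excess (l : R) (ws w : X * X * R) : R :=
  ((1 + l) * `|(w.1.1 - ws.1.1) + (w.1.2 - ws.1.2)| ^+ 2
   + (1 - l) * `|(w.1.1 - ws.1.1) - (w.1.2 - ws.1.2)| ^+ 2) / 2
  + beta ^+ 2 * (w.2 - ws.2) ^+ 2.

Lemma lagrange_excess_id l ws : lagrange_excess l ws ws = 0.
Proof. by rewrite /lagrange_excess !subrr addr0 normr0 expr0n /= !(mulr0, mul0r, addr0). Qed.

Lemma sqwdist_lagrange l ws z w : lagrange_point l ws z -> C w ->
  sqwdist beta w z = sqwdist beta ws z + lagrange_excess l ws w.
Proof.
case: ws z w => [[xs ys] gs] [[x0 y0] g0] [[x y] g] [/= Cs -> -> Eg].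
rewrite /Calpha /sqwdist /lagrange_excess /= in Cs *.
have [h ->] : exists h, x = xs + h by exists (x - xs); rewrite addrC subrK.
have [k ->] : exists k, y = ys + k by exists (y - ys); rewrite addrC subrK.
rewrite !ipE => Cw.
have -> : g0 = gs - l * alpha / beta ^+ 2 by rewrite -Eg; field.
rewrite !real_normK ?num_real // -!ipxx !ipE.
rewrite ?(ipC ys xs) ?(ipC h xs) ?(ipC k xs) ?(ipC h ys) ?(ipC k ys) ?(ipC k h).
have -> : ip h k = alpha * g - alpha * gs - ip xs k - ip h ys by rewrite -Cw -Cs; ring.
by rewrite (ipC h ys); field.
Qed.

Lemma lagrange_excess_ge0 l ws w : -1 <= l <= 1 -> 0 <= lagrange_excess l ws w.
Proof.
case/andP=> l_ge l_le; apply: addr_ge0; last by apply: mulr_ge0; apply: sqr_ge0.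
by apply/divr_ge0/ler0n/addr_ge0; apply: mulr_ge0; rewrite ?sqr_ge0 //; lra.
Qed.

Lemma wproj_lagrange l ws z : -1 <= l <= 1 -> lagrange_point l ws z ->
  wproj beta C z = [set w | C w /\ lagrange_excess l ws w = 0].
Proof.
move=> hl lp; apply: (wproj_excess (ws := ws)); first by case: lp.
by move=> w Cw; split; [exact: lagrange_excess_ge0 | exact: sqwdist_lagrange].
Qed.

Lemma lagrange_excess_eq0 l ws w : -1 <= l <= 1 -> lagrange_excess l ws w = 0 ->
  [/\ (1 + l) * `|(w.1.1 - ws.1.1) + (w.1.2 - ws.1.2)| ^+ 2 = 0,
      (1 - l) * `|(w.1.1 - ws.1.1) - (w.1.2 - ws.1.2)| ^+ 2 = 0 & w.2 = ws.2].
Proof.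
case/andP=> l_ge l_le; rewrite /lagrange_excess.
set a := (1 + l) * _; set b := (1 - l) * _; set c := beta ^+ 2 * _.
have a_ge0 : 0 <= a by apply: mulr_ge0; rewrite ?sqr_ge0 //; lra.
have b_ge0 : 0 <= b by apply: mulr_ge0; rewrite ?sqr_ge0 //; lra.
have c_ge0 : 0 <= c by apply: mulr_ge0; apply: sqr_ge0.
move=> excess0; have /eqP : c = 0 by lra.
rewrite mulf_eq0 expf_eq0 (negbTE beta_neq0) sqrf_eq0 subr_eq0 /= => /eqP.
by split; lra.
Qed.

Lemma wproj_lagrange_interior l ws z : -1 < l < 1 -> lagrange_point l ws z ->
  wproj beta C z = [set ws].
Proof.
case/andP=> l_gt l_lt lp; have hl : -1 <= l <= 1 by apply/andP; split; lra.
have lD_neq0 : 1 + l != 0 by apply/eqP; lra.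
have lB_neq0 : 1 - l != 0 by apply/eqP; lra.
rewrite (wproj_lagrange hl lp); apply/seteqP; split=> w /=; last first.
  by move=> ->; split; [case: lp | exact: lagrange_excess_id].
case=> _ /(lagrange_excess_eq0 hl) [/(mul_sqr_norm_eq0 lD_neq0) hk0].
move=> /(mul_sqr_norm_eq0 lB_neq0) /subr0_eq hk g_eq.
have /double_eq0 h0 : (w.1.1 - ws.1.1) + (w.1.1 - ws.1.1) = 0 by rewrite {2}hk.
move: hk; rewrite h0 => /esym.
by case: w ws h0 g_eq {hk0 lp} => [[x y] g] [[xs ys] gs] /= /subr0_eq -> -> /subr0_eq ->.
Qed.

Lemma wproj_lagrange_N1 ws z : lagrange_point (-1) ws z ->
  wproj beta C z = [set w | C w /\ w.1.1 - w.1.2 = z.1.1 /\ w.2 = ws.2].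
Proof.
move=> lp; have hl : -1 <= (-1 : R) <= 1 by rewrite lexx /=; lra.
have z1 : z.1.1 = ws.1.1 - ws.1.2 by case: lp => _ -> _ _; rewrite scaleN1r.
have two_neq0 : (1 : R) - -1 != 0 by apply/eqP; lra.
rewrite (wproj_lagrange hl lp) z1; apply/seteqP; split=> w /= [Cw].
- case/(lagrange_excess_eq0 hl) => _ /(mul_sqr_norm_eq0 two_neq0).
  by rewrite subrACA => /subr0_eq.
- case=> xy g_eq; split=> //.
  by rewrite /lagrange_excess subrACA xy g_eq !subrr normr0 expr0n /= !(mulr0, mul0r, addr0).
Qed.

Definition mirror (w : X * X * R) : X * X * R := (w.1.1, - w.1.2, - w.2).

Lemma mirrorK : involutive mirror.
Proof. by case=> [[x y] g]; rewrite /mirror /= !opprK. Qed.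

Lemma Calpha_mirror w : C (mirror w) <-> C w.
Proof. by rewrite /Calpha /= ipNr mulrN; split=> [/oppr_inj|->]. Qed.

Lemma wdist_mirror w z : wdist beta (mirror w) (mirror z) = wdist beta w z.
Proof. by rewrite /wdist /= -!opprD !normrN. Qed.

Lemma wproj_mirror z : wproj beta C (mirror z) = mirror @^-1` wproj beta C z.
Proof. exact: wproj_involutive mirrorK Calpha_mirror wdist_mirror z. Qed.

Hypothesis alpha_neq0 : alpha != 0.
Hypothesis X_nontrivial : exists x : X, x != 0.

Local Notation P := (wproj beta C).
Local Notation s2 := (Num.sqrt (2 : R)).

Fact sqrt2_neq0 : s2 != 0. Proof. by rewrite sqrtr_eq0 -ltNge. Qed.

(* hornerE would also apply its monoid laws, whose output ring does not accept. *)
Let hornerE' := (hornerD, hornerN, hornerM, hornerC, hornerX, horner_exp).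

Lemma gamma_shift_inj g0 : injective (fun l : R => g0 + l * alpha / beta ^+ 2).
Proof.
by move=> l l' /addrI /(mulIf (invr_neq0 (expf_neq0 2 beta_neq0))) /(mulIf alpha_neq0).
Qed.

Lemma wproj_Calpha_generic x0 y0 g0 : x0 != y0 -> x0 != - y0 ->
  let p := 2 * ip x0 y0 in
  let q := `|x0| ^+ 2 + `|y0| ^+ 2 in
  let g := fun l : R => ((l ^+ 2 + 1) * p - 2 * l * q) / (1 - l ^+ 2) ^+ 2
                        - 2 * l * alpha ^+ 2 / beta ^+ 2 - 2 * alpha * g0 in
  exists l : R, [/\ -1 < l < 1, g l = 0,
    (forall l' : R, -1 < l' < 1 -> g l' = 0 -> l' = l) &
    P (x0, y0, g0) =
      [set (((1 - l ^+ 2)^-1 *: (x0 - l *: y0), (1 - l ^+ 2)^-1 *: (y0 - l *: x0)),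
            g0 + l * alpha / beta ^+ 2)]].
Proof.
move=> xy xNy p q g.
have den_neq0 (l : R) : -1 < l < 1 -> 1 - l ^+ 2 != 0.
  by case/andP=> ? ?; apply/eqP; nra.
pose num : {poly R} := ('X ^+ 2 + 1) * p%:P - 'X * (2 * q)%:P
  - ('X * (2 * alpha ^+ 2 / beta ^+ 2)%:P + (2 * alpha * g0)%:P) * (1 - 'X ^+ 2) ^+ 2.
apply: (exists_unique_root_singleton (n := num) (d := fun l => (1 - l ^+ 2) ^+ 2))
  => [l l' [_ _ /gamma_shift_inj] // | | l hl | l hl gl].
- have -> : num.[-1] = 2 * `|x0 + y0| ^+ 2 by rewrite !hornerE' normD2 /p /q; ring.
  have -> : num.[1] = - (2 * `|x0 - y0| ^+ 2) by rewrite !hornerE' normB2 /p /q; ring.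
  by rewrite mulrN oppr_lt0 !pmulr_rgt0 ?exprn_gt0 ?normr_gt0 ?subr_eq0 ?addr_eq0.
- by rewrite /= !hornerE' /g; field; rewrite den_neq0.
- have d_neq0 := den_neq0 l hl.
  set c := (1 - l ^+ 2)^-1.
  have cK : c - c * l * l = 1 by rewrite /c; field.
  have stationary a b : a = c *: (a - l *: b) + l *: (c *: (b - l *: a)).
    by rewrite !scalerBr !scalerA (mulrC l c) addrA subrK -scalerBl cK scale1r.
  apply: wproj_lagrange_interior hl _.
  split=> /=; [|exact: stationary|exact: stationary|by field].
  rewrite /Calpha /= !ipE !ipxx (ipC y0); apply: subr0_eq.
  (* <xs, ys> - alpha gs = g l / 2 *)
  by rewrite -(mul0r (2^-1 : R)) -gl /g /p /q /c; field; rewrite beta_neq0 d_neq0.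
Qed.

Lemma wproj_Calpha_antidiagonal_interior x0 g0 : x0 != 0 ->
  let g1 := fun l : R => 2 * `|x0| ^+ 2 / (1 - l) ^+ 2
                         + 2 * l * alpha ^+ 2 / beta ^+ 2 + 2 * alpha * g0 in
  alpha * (g0 - alpha / beta ^+ 2) < - (`|x0| ^+ 2 / 4) ->
  exists l : R, [/\ -1 < l < 1, g1 l = 0,
    (forall l' : R, -1 < l' < 1 -> g1 l' = 0 -> l' = l) &
    P (x0, - x0, g0) =
      [set (((1 - l)^-1 *: x0, (1 - l)^-1 *: (- x0)), g0 + l * alpha / beta ^+ 2)]].
Proof.
move=> x0_neq0 g1 far.
have den_neq0 (l : R) : -1 < l < 1 -> 1 - l != 0.
  by case/andP=> ? ?; apply/eqP; lra.
pose num : {poly R} := (2 * `|x0| ^+ 2)%:P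
  + ('X * (2 * alpha ^+ 2 / beta ^+ 2)%:P + (2 * alpha * g0)%:P) * (1 - 'X) ^+ 2.
apply: (exists_unique_root_singleton (n := num) (d := fun l => (1 - l) ^+ 2))
  => [l l' [_ _ /gamma_shift_inj] // | | l hl | l hl gl].
- have -> : num.[-1] = 2 * `|x0| ^+ 2 + 8 * (alpha * (g0 - alpha / beta ^+ 2)).
    by rewrite !hornerE'; ring.
  have -> : num.[1] = 2 * `|x0| ^+ 2 by rewrite !hornerE'; ring.
  have : 0 < `|x0| ^+ 2 by rewrite exprn_gt0 // normr_gt0.
  by nra.
- by rewrite /= !hornerE' /g1; field; rewrite den_neq0.
- have d_neq0 := den_neq0 l hl.
  set c := (1 - l)^-1.
  have cK : c - l * c = 1 by rewrite /c; field.
  apply: wproj_lagrange_interior hl _; split=> /=; last by field.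
  + rewrite /Calpha /= !ipE !ipxx; apply: subr0_eq.
    (* <xs, ys> - alpha gs = - g1 l / 2 *)
    rewrite -oppr0 -(mul0r (2^-1 : R)) -gl /g1 /c.
    by field; rewrite beta_neq0 d_neq0.
  + by rewrite !scalerN scalerA -scalerBl cK scale1r.
  + by rewrite scalerN scalerA addrC -scalerBl -opprB cK scaleN1r.
Qed.

Lemma wproj_Calpha_diagonal_mirror x0 g0 :
  P (x0, x0, g0) = mirror @^-1` P (x0, - x0, - g0).
Proof. by rewrite -wproj_mirror /mirror /= !opprK. Qed.

Lemma wproj_Calpha_diagonal_interior x0 g0 : x0 != 0 ->
  let g2 := fun l : R => 2 * `|x0| ^+ 2 / (1 + l) ^+ 2
                         - 2 * l * alpha ^+ 2 / beta ^+ 2 - 2 * alpha * g0 in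
  `|x0| ^+ 2 / 4 < alpha * (g0 + alpha / beta ^+ 2) ->
  exists l : R, [/\ -1 < l < 1, g2 l = 0,
    (forall l' : R, -1 < l' < 1 -> g2 l' = 0 -> l' = l) &
    P (x0, x0, g0) =
      [set (((1 + l)^-1 *: x0, (1 + l)^-1 *: x0), g0 + l * alpha / beta ^+ 2)]].
Proof.
move=> x0_neq0 g2 far.
have g2N l : g2 (- l) = 2 * `|x0| ^+ 2 / (1 - l) ^+ 2
    + 2 * l * alpha ^+ 2 / beta ^+ 2 + 2 * alpha * (- g0) by rewrite /g2; ring.
have [|l [hl gl l_uniq Pl]] := wproj_Calpha_antidiagonal_interior (g0 := - g0) x0_neq0.
  by lra.
exists (- l); split.
- by move: hl => /andP[? ?]; apply/andP; split; lra.
- by rewrite g2N.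
- move=> l' hl' gl'; rewrite -[l']opprK (l_uniq (- l')) //.
    by move: hl' => /andP[? ?]; apply/andP; split; lra.
  by rewrite -g2N opprK.
- rewrite wproj_Calpha_diagonal_mirror Pl (preimage_set1_involutive mirrorK).
  by rewrite /mirror /= !scalerN opprK opprD opprK !mulNr.
Qed.

Lemma wproj_Calpha_antidiagonal_sphere x0 g0 :
  - (`|x0| ^+ 2 / 4) <= alpha * (g0 - alpha / beta ^+ 2) ->
  P (x0, - x0, g0) =
    [set w | exists u : X,
       `|u| = Num.sqrt (2 * alpha * (g0 - alpha / beta ^+ 2) + `|x0| ^+ 2 / 2)
       /\ w = ((2^-1 *: x0 + s2^-1 *: u, - (2^-1 *: x0) + s2^-1 *: u),
               g0 - alpha / beta ^+ 2)].
Proof.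
set gs := g0 - _; set S := 2 * alpha * gs + _ => near.
have S_ge0 : 0 <= S by rewrite /S; lra.
have halves : 2^-1 *: x0 + 2^-1 *: x0 = x0.
  by rewrite -scalerDl (_ : 2^-1 + 2^-1 = 1 :> R) ?scale1r //; field.
pose B u : X * X * R := ((2^-1 *: x0 + s2^-1 *: u, - (2^-1 *: x0) + s2^-1 *: u), gs).
have B_diff u : (B u).1.1 - (B u).1.2 = x0.
  by rewrite /= opprD opprK addrACA subrr addr0 halves.
have B_C u : C (B u) <-> `|u| = Num.sqrt S.
  rewrite /Calpha /= ip_diff_sqr !sqr_normZ !exprVn sqr_sqrtr // norm_eq_sqrt //.
  by rewrite /S; split=> E; lra.
have [u0 u0_norm] := exists_norm X_nontrivial (sqrtr_ge0 S).
rewrite (@wproj_lagrange_N1 (B u0)); last first.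
  split; first exact/B_C.
  - by rewrite scaleN1r B_diff.
  - by rewrite scaleN1r -opprB B_diff.
  - by rewrite /B /gs /=; field.
apply/seteqP; split=> [[[x y] g] /= [Cw [xy g_eq]]|w [u [u_norm ->]]]; last first.
  by split; [apply/B_C | split; [apply: B_diff|]].
rewrite {}g_eq in Cw *.
have Bx : (x, y, gs) = B (s2 *: (x - 2^-1 *: x0)).
  rewrite /B scalerA mulVf ?sqrt2_neq0 // scale1r addrC subrK; congr (_, _, _).
  by rewrite addrCA -opprD halves -xy opprB addrC subrK.
by exists (s2 *: (x - 2^-1 *: x0)); split; [apply/B_C; rewrite -Bx|].
Qed.

Lemma wproj_Calpha_antidiagonal_singleton x0 g0 :
  - (`|x0| ^+ 2 / 4) <= alpha * (g0 - alpha / beta ^+ 2) ->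
  is_singleton (P (x0, - x0, g0)) <->
    alpha * (g0 - alpha / beta ^+ 2) = - (`|x0| ^+ 2 / 4).
Proof.
move=> near; rewrite wproj_Calpha_antidiagonal_sphere //.
apply: iff_trans (sphere_param_singleton X_nontrivial _ (sqrtr_ge0 _)) _.
  by move=> u v [/addrI /(scalerI (invr_neq0 sqrt2_neq0))].
by split=> [/eqP|E]; [rewrite sqrtr_eq0 => ?; lra | apply/eqP; rewrite sqrtr_eq0; lra].
Qed.

Lemma wproj_Calpha_diagonal_sphere x0 g0 :
  alpha * (g0 + alpha / beta ^+ 2) <= `|x0| ^+ 2 / 4 ->
  P (x0, x0, g0) =
    [set w | exists v : X,
       `|v| = Num.sqrt (- 2 * alpha * (g0 + alpha / beta ^+ 2) + `|x0| ^+ 2 / 2)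
       /\ w = ((2^-1 *: x0 - s2^-1 *: v, 2^-1 *: x0 + s2^-1 *: v),
               g0 + alpha / beta ^+ 2)].
Proof.
move=> near; rewrite wproj_Calpha_diagonal_mirror wproj_Calpha_antidiagonal_sphere; last lra.
have -> : 2 * alpha * (- g0 - alpha / beta ^+ 2) = - 2 * alpha * (g0 + alpha / beta ^+ 2).
  by ring.
by apply: preimage_sphere_involutive mirrorK _ => u; rewrite /mirror /= !scalerN !opprD !opprK.
Qed.

Lemma wproj_Calpha_diagonal_singleton x0 g0 :
  alpha * (g0 + alpha / beta ^+ 2) <= `|x0| ^+ 2 / 4 ->
  is_singleton (P (x0, x0, g0)) <-> alpha * (g0 + alpha / beta ^+ 2) = `|x0| ^+ 2 / 4.
Proof.
move=> near; rewrite wproj_Calpha_diagonal_mirror.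
apply: iff_trans (is_singleton_preimage_involutive mirrorK _) _.
apply: iff_trans (wproj_Calpha_antidiagonal_singleton _) _; first lra.
by split=> E; lra.
Qed.

Lemma wproj_Calpha_origin_sphere g0 : alpha ^+ 2 / beta ^+ 2 < alpha * g0 ->
  P (0, 0, g0) =
    [set w | exists u : X,
       `|u| = Num.sqrt (2 * alpha * (g0 - alpha / beta ^+ 2))
       /\ w = ((s2^-1 *: u, s2^-1 *: u), g0 - alpha / beta ^+ 2)].
Proof.
move=> far; rewrite -[t in P (_, t, _)]oppr0 wproj_Calpha_antidiagonal_sphere; last first.
  by rewrite normr0 expr0n /= mul0r oppr0; lra.
rewrite normr0 expr0n /= mul0r addr0 scaler0 oppr0.
by apply/seteqP; split=> w [u [u_norm ->]]; exists u; rewrite ?add0r.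
Qed.

Lemma wproj_Calpha_origin_not_singleton g0 : alpha ^+ 2 / beta ^+ 2 < alpha * g0 ->
  ~ is_singleton (P (0, 0, g0)).
Proof.
move=> far; rewrite -[t in P (_, t, _)]oppr0.
move/wproj_Calpha_antidiagonal_singleton; rewrite normr0 expr0n /= mul0r oppr0.
have near : 0 <= alpha * (g0 - alpha / beta ^+ 2) by lra.
by move/(_ near); lra.
Qed.

Lemma wproj_Calpha_origin_single g0 : `|alpha * g0| <= alpha ^+ 2 / beta ^+ 2 ->
  P (0, 0, g0) = [set ((0, 0), 0)].
Proof.
set K := alpha ^+ 2 / beta ^+ 2 => near.
have K_gt0 : 0 < K by rewrite divr_gt0 // lt_def sqrf_eq0 ?alpha_neq0 ?beta_neq0 sqr_ge0.
pose l := - (alpha * g0) / K.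
have hl : -1 <= l <= 1.
  by rewrite -ler_norml normrM normrN normfV (gtr0_norm K_gt0) ler_pdivrMr // mul1r.
have C0 : C ((0, 0), 0) by rewrite /Calpha /= ip0l mulr0.
have lp : lagrange_point l ((0, 0), 0) (0, 0, g0).
  by split=> //=; rewrite ?scaler0 ?addr0 // /l /K; field; rewrite alpha_neq0 beta_neq0.
rewrite (wproj_lagrange hl lp); apply/seteqP; split=> [[[x y] g]|w ->] /=; last first.
  by split=> //; apply: lagrange_excess_id.
case=> Cw /(lagrange_excess_eq0 hl) /=; rewrite !subr0 normD2 normB2.
move: Cw; rewrite /Calpha /= => -> [+ + g_eq0]; rewrite g_eq0 mulr0 => sum0 diff0.
have x_ge0 := sqr_ge0 `|x|; have y_ge0 := sqr_ge0 `|y|.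
have x_sqr0 : `|x| ^+ 2 = 0 by lra.
have y_sqr0 : `|y| ^+ 2 = 0 by lra.
by rewrite (sqr_norm_eq0 x_sqr0) (sqr_norm_eq0 y_sqr0).
Qed.

Lemma wproj_Calpha_origin_mirror g0 : P (0, 0, g0) = mirror @^-1` P (0, 0, - g0).
Proof. by rewrite wproj_Calpha_diagonal_mirror oppr0. Qed.

Lemma wproj_Calpha_origin_sphere_neg g0 : alpha * g0 < - (alpha ^+ 2 / beta ^+ 2) ->
  P (0, 0, g0) =
    [set w | exists v : X,
       `|v| = Num.sqrt (- 2 * alpha * (g0 + alpha / beta ^+ 2))
       /\ w = ((- (s2^-1 *: v), s2^-1 *: v), g0 + alpha / beta ^+ 2)].
Proof.
move=> far; rewrite wproj_Calpha_origin_mirror wproj_Calpha_origin_sphere; last lra.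
have -> : 2 * alpha * (- g0 - alpha / beta ^+ 2) = - 2 * alpha * (g0 + alpha / beta ^+ 2).
  by ring.
by apply: preimage_sphere_involutive mirrorK _ => u; rewrite /mirror /= !scalerN !opprD !opprK.
Qed.

Lemma wproj_Calpha_origin_not_singleton_neg g0 : alpha * g0 < - (alpha ^+ 2 / beta ^+ 2) ->
  ~ is_singleton (P (0, 0, g0)).
Proof.
move=> far; rewrite wproj_Calpha_origin_mirror.
move/(is_singleton_preimage_involutive mirrorK).
by apply: wproj_Calpha_origin_not_singleton; lra.
Qed.

End CalphaProjection.

Unset Implicit Arguments.

Theorem mainTheorem2 (R : realType) (X : completeNormedModType R)
  (ip : X -> X -> R) (Hip : is_inner_product ip)
  (Hnt : exists x : X, x != 0)
  (alpha beta : R) (Ha : alpha != 0) (Hb : 0 < beta)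
  (x0 y0 : X) (g0 : R) :
  let P := wproj beta (Calpha ip alpha) in
  let s2 := Num.sqrt 2 in
  (* (i) *)
  (x0 != y0 -> x0 != - y0 ->
   let p := 2 * ip x0 y0 in
   let q := `|x0| ^+ 2 + `|y0| ^+ 2 in
   let g := fun l : R => ((l ^+ 2 + 1) * p - 2 * l * q) / (1 - l ^+ 2) ^+ 2
                         - 2 * l * alpha ^+ 2 / beta ^+ 2 - 2 * alpha * g0 in
   exists l : R, [/\ -1 < l < 1, g l = 0,
     (forall l' : R, -1 < l' < 1 -> g l' = 0 -> l' = l) &
     P (x0, y0, g0) =
       [set (((1 - l ^+ 2)^-1 *: (x0 - l *: y0),
              (1 - l ^+ 2)^-1 *: (y0 - l *: x0)),
             g0 + l * alpha / beta ^+ 2)]]) /\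
  (* (ii) *)
  (x0 != 0 ->
   let g1 := fun l : R => 2 * `|x0| ^+ 2 / (1 - l) ^+ 2
                          + 2 * l * alpha ^+ 2 / beta ^+ 2 + 2 * alpha * g0 in
   (alpha * (g0 - alpha / beta ^+ 2) < - (`|x0| ^+ 2 / 4) ->
    exists l : R, [/\ -1 < l < 1, g1 l = 0,
      (forall l' : R, -1 < l' < 1 -> g1 l' = 0 -> l' = l) &
      P (x0, - x0, g0) =
        [set (((1 - l)^-1 *: x0, (1 - l)^-1 *: (- x0)),
              g0 + l * alpha / beta ^+ 2)]]) /\
   (alpha * (g0 - alpha / beta ^+ 2) >= - (`|x0| ^+ 2 / 4) ->
    P (x0, - x0, g0) =
      [set w | exists u : X,
         `|u| = Num.sqrt (2 * alpha * (g0 - alpha / beta ^+ 2) + `|x0| ^+ 2 / 2)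
         /\ w = ((2^-1 *: x0 + s2^-1 *: u, - (2^-1 *: x0) + s2^-1 *: u),
                 g0 - alpha / beta ^+ 2)] /\
    (is_singleton (P (x0, - x0, g0)) <->
       alpha * (g0 - alpha / beta ^+ 2) = - (`|x0| ^+ 2 / 4)))) /\
  (* (iii) *)
  (x0 != 0 ->
   let g2 := fun l : R => 2 * `|x0| ^+ 2 / (1 + l) ^+ 2
                          - 2 * l * alpha ^+ 2 / beta ^+ 2 - 2 * alpha * g0 in
   (alpha * (g0 + alpha / beta ^+ 2) > `|x0| ^+ 2 / 4 ->
    exists l : R, [/\ -1 < l < 1, g2 l = 0,
      (forall l' : R, -1 < l' < 1 -> g2 l' = 0 -> l' = l) &
      P (x0, x0, g0) =
        [set (((1 + l)^-1 *: x0, (1 + l)^-1 *: x0),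
              g0 + l * alpha / beta ^+ 2)]]) /\
   (alpha * (g0 + alpha / beta ^+ 2) <= `|x0| ^+ 2 / 4 ->
    P (x0, x0, g0) =
      [set w | exists v : X,
         `|v| = Num.sqrt (- 2 * alpha * (g0 + alpha / beta ^+ 2) + `|x0| ^+ 2 / 2)
         /\ w = ((2^-1 *: x0 - s2^-1 *: v, 2^-1 *: x0 + s2^-1 *: v),
                 g0 + alpha / beta ^+ 2)] /\
    (is_singleton (P (x0, x0, g0)) <->
       alpha * (g0 + alpha / beta ^+ 2) = `|x0| ^+ 2 / 4))) /\
  (* (iv) *)
  ((alpha * g0 > alpha ^+ 2 / beta ^+ 2 ->
    P (0, 0, g0) =
      [set w | exists u : X,
         `|u| = Num.sqrt (2 * alpha * (g0 - alpha / beta ^+ 2))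
         /\ w = ((s2^-1 *: u, s2^-1 *: u), g0 - alpha / beta ^+ 2)] /\
    ~ is_singleton (P (0, 0, g0))) /\
   (`|alpha * g0| <= alpha ^+ 2 / beta ^+ 2 ->
    P (0, 0, g0) = [set ((0, 0), 0)]) /\
   (alpha * g0 < - (alpha ^+ 2 / beta ^+ 2) ->
    P (0, 0, g0) =
      [set w | exists v : X,
         `|v| = Num.sqrt (- 2 * alpha * (g0 + alpha / beta ^+ 2))
         /\ w = ((- (s2^-1 *: v), s2^-1 *: v), g0 + alpha / beta ^+ 2)] /\
    ~ is_singleton (P (0, 0, g0)))).
Proof.
move=> P s2; have beta_neq0 : beta != 0 by rewrite gt_eqF.
split; [|split; [|split]].
- exact: wproj_Calpha_generic.
- move=> x0_neq0; split.
  + exact: wproj_Calpha_antidiagonal_interior.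
  + move=> near; split.
    * exact: wproj_Calpha_antidiagonal_sphere.
    * exact: wproj_Calpha_antidiagonal_singleton.
- move=> x0_neq0; split.
  + exact: wproj_Calpha_diagonal_interior.
  + move=> near; split.
    * exact: wproj_Calpha_diagonal_sphere.
    * exact: wproj_Calpha_diagonal_singleton.
- split; [|split].
  + move=> far; split.
    * exact: wproj_Calpha_origin_sphere.
    * exact: wproj_Calpha_origin_not_singleton.
  + exact: wproj_Calpha_origin_single.
  + move=> far; split.
    * exact: wproj_Calpha_origin_sphere_neg.
    * exact: wproj_Calpha_origin_not_singleton_neg.
Qed.
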